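(* Let $K\ge2$, $\theta>1$, $T>0$, and let $\zeta_1,\dots,\zeta_{K-1}$ be $C^1$ real functions on $[T,\infty)$ satisfying, for $k=1,\dots,K-1$ and all $t\ge T$, $$\dot\zeta_k=t^{-1}\Big(-\gamma_{k+1}(e^{-\zeta_{k+1}}-1)+2\gamma_k(e^{-\zeta_k}-1)-\gamma_{k-1}(e^{-\zeta_{k-1}}-1)\Big)+O(t^{-\theta}),$$ where $\gamma_k=\frac{k(K-k)}{2}$ (so $\gamma_0=\gamma_K=0$, and the terms involving $\zeta_0,\zeta_K$ vanish), and $O(t^{-\theta})$ denotes a function bounded in absolute value by $Ct^{-\theta}$ for a fixed constant $C$. Then there exists $M_1>0$ such that $|\zeta_k(t)|\le M_1$ for all $k=1,\dots,K-1$ and all $t\ge T$. *)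

From Stdlib Require Import Reals.
Open Scope R_scope.

Definition gam (K k : nat) : R := INR k * INR (K - k) / 2.

(* For k = 1 the term with index k-1 = 0 has gam K 0 = 0; for k = K-1 the
   term with index K has gam K K = 0, so the values z 0, z K are irrelevant. *)
Definition rhs (K : nat) (z : nat -> R -> R) (k : nat) (t : R) : R :=
  - gam K (S k) * (exp (- z (S k) t) - 1)
  + 2 * gam K k * (exp (- z k t) - 1)
  - gam K (k - 1)%nat * (exp (- z (k - 1)%nat t) - 1).

(* The functional V = Σ γ_k (e^{-ζ_k} - 1 + ζ_k) is a Lyapunov function.  Writing
   W_k = γ_k (e^{-ζ_k} - 1), the main part of the system is ζ'_k = -t^{-1} (ΔW)_k with the
   discrete Laplacian (ΔW)_k = W_{k+1} - 2 W_k + W_{k-1} and W_0 = W_K = 0, so the main part of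
   V' = -Σ W_k ζ'_k equals t^{-1} Σ W_k (ΔW)_k = -t^{-1} Σ (W_k - W_{k-1})^2 ≤ 0.  The error terms
   are bounded by C t^{-θ} (2V + Σ γ_k), and t^{-θ} is integrable at infinity since θ > 1, so
   Gronwall's inequality bounds V, which controls every |ζ_k|. *)
From Stdlib Require Import Reals Lra Lia Psatz.
Open Scope R_scope.

Fixpoint sum1n (g : nat -> R) (n : nat) : R :=
  match n with O => 0 | S m => sum1n g m + g (S m) end.

Lemma sum1n_le g1 g2 n :
  (forall k, (1 <= k <= n)%nat -> g1 k <= g2 k) -> sum1n g1 n <= sum1n g2 n.
Proof.
  induction n as [|n IH]; intros H; simpl; [lra|].
  assert (sum1n g1 n <= sum1n g2 n) by (apply IH; intros; apply H; lia).
  assert (g1 (S n) <= g2 (S n)) by (apply H; lia).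
  lra.
Qed.

Lemma sum1n_ext g1 g2 n : (forall k, g1 k = g2 k) -> sum1n g1 n = sum1n g2 n.
Proof. intros H; induction n as [|n IH]; simpl; [lra|]. rewrite IH, H; lra. Qed.

Lemma sum1n_plus g1 g2 n : sum1n (fun k => g1 k + g2 k) n = sum1n g1 n + sum1n g2 n.
Proof. induction n as [|n IH]; simpl; [lra|]. rewrite IH; ring. Qed.

Lemma sum1n_scal a g n : sum1n (fun k => a * g k) n = a * sum1n g n.
Proof. induction n as [|n IH]; simpl; [lra|]. rewrite IH; ring. Qed.

Lemma sum1n_ge0 g n : (forall k, (1 <= k <= n)%nat -> 0 <= g k) -> 0 <= sum1n g n.
Proof.
  intros H. apply Rle_trans with (sum1n (fun _ => 0) n).
  - clear H; induction n; simpl; lra.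
  - apply sum1n_le; auto.
Qed.

Lemma sum1n_ge_term g n k :
  (forall j, (1 <= j <= n)%nat -> 0 <= g j) -> (1 <= k <= n)%nat -> g k <= sum1n g n.
Proof.
  induction n as [|n IH]; intros H Hk; [lia|]. simpl.
  destruct (Nat.eq_dec k (S n)) as [->|Hne].
  - assert (0 <= sum1n g n) by (apply sum1n_ge0; intros; apply H; lia). lra.
  - assert (g k <= sum1n g n) by (apply IH; [intros; apply H; lia | lia]).
    assert (0 <= g (S n)) by (apply H; lia). lra.
Qed.

Lemma derivable_pt_lim_sum1n (h h' : nat -> R -> R) n t :
  (forall k, (1 <= k <= n)%nat -> derivable_pt_lim (h k) t (h' k t)) ->
  derivable_pt_lim (fun s => sum1n (fun k => h k s) n) t (sum1n (fun k => h' k t) n).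
Proof.
  induction n as [|n IH]; intros H; simpl.
  - apply derivable_pt_lim_const.
  - apply (derivable_pt_lim_plus (fun s => sum1n (fun k => h k s) n) (h (S n))).
    + apply IH; intros; apply H; lia.
    + apply H; lia.
Qed.

Lemma sum1n_laplacian W n : W 0%nat = 0 ->
  sum1n (fun k => W k * (2 * W k - W (S k) - W (k - 1)%nat)) n
  = sum1n (fun k => (W k - W (k - 1)%nat) ^ 2) n + W n * (W n - W (S n)).
Proof.
  intros W0. induction n as [|n IH]; cbn [sum1n].
  - rewrite W0; ring.
  - rewrite IH. replace (S n - 1)%nat with n by lia. ring.
Qed.

Lemma sum1n_laplacian_ge0 W n : W 0%nat = 0 -> W (S n) = 0 ->
  0 <= sum1n (fun k => W k * (2 * W k - W (S k) - W (k - 1)%nat)) n.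
Proof.
  intros W0 Wn. rewrite sum1n_laplacian, Wn by exact W0.
  assert (0 <= sum1n (fun k => (W k - W (k - 1)%nat) ^ 2) n)
    by (apply sum1n_ge0; intros; apply pow2_ge_0).
  nra.
Qed.

Definition exp_excess (a : R) : R := exp (- a) - 1 + a.

Lemma exp_excess_ge0 a : 0 <= exp_excess a.
Proof. unfold exp_excess. pose proof (exp_ineq1_le (- a)). lra. Qed.

Lemma exp_ge_double y : 0 <= y -> 2 * y <= exp y.
Proof.
  intros Hy. replace y with (y / 2 + y / 2) by field. rewrite exp_plus.
  pose proof (exp_ineq1_le (y / 2)).
  assert ((1 + y / 2) * (1 + y / 2) <= exp (y / 2) * exp (y / 2)) by (apply Rmult_le_compat; lra).
  assert (0 <= (1 - y / 2) * (1 - y / 2)) by apply Rle_0_sqr.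
  lra.
Qed.

Lemma Rabs_le_exp_excess a : Rabs a <= exp_excess a + 1.
Proof.
  unfold exp_excess, Rabs; destruct (Rcase_abs a).
  - pose proof (exp_ge_double (- a)). lra.
  - pose proof (exp_pos (- a)). lra.
Qed.

Lemma Rabs_expN_sub1_le a : Rabs (exp (- a) - 1) <= 2 * exp_excess a + 1.
Proof.
  unfold exp_excess, Rabs; pose proof (exp_pos (- a)).
  destruct (Rcase_abs (exp (- a) - 1)).
  - pose proof (exp_ineq1_le (- a)). lra.
  - destruct (Rle_dec 0 a); [lra|]. pose proof (exp_ge_double (- a)). lra.
Qed.

Lemma derivable_pt_lim_exp_excess_comp g t d :
  derivable_pt_lim g t d ->
  derivable_pt_lim (fun s => exp_excess (g s)) t ((1 - exp (- g t)) * d).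
Proof.
  intros Hg. unfold exp_excess.
  replace ((1 - exp (- g t)) * d) with (exp (- g t) * - d - 0 + d) by ring.
  apply (derivable_pt_lim_plus (fun s => exp (- g s) - 1) g); [|exact Hg].
  apply (derivable_pt_lim_minus (fun s => exp (- g s)) (fun _ => 1));
    [|apply derivable_pt_lim_const].
  apply (derivable_pt_lim_comp (fun s => - g s) exp); [|apply derivable_pt_lim_exp].
  apply (derivable_pt_lim_opp g), Hg.
Qed.

Lemma nonincreasing_of_derive_nonpos (g g' : R -> R) T :
  (forall s, T <= s -> derivable_pt_lim g s (g' s)) ->
  (forall s, T <= s -> g' s <= 0) ->
  forall s, T <= s -> g s <= g T.
Proof.
  intros Hd Hneg s Hs. destruct (Req_dec s T) as [->|Hne]; [lra|].
  destruct (MVT_cor2 g g' T s) as [c [Hc Hcs]]; [lra | intros c Hc; apply Hd; lra |].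
  assert (g' c <= 0) by (apply Hneg; lra).
  assert (0 <= - g' c * (s - T)) by (apply Rmult_le_pos; lra).
  lra.
Qed.

(* The integrating factor is exp(c/(θ-1) s^{1-θ}), whose logarithmic derivative is -c s^{-θ}. *)
Lemma gronwall_power (u du : R -> R) c theta T :
  0 <= c -> 1 < theta -> 0 < T ->
  (forall s, T <= s -> derivable_pt_lim u s (du s)) ->
  (forall s, T <= s -> du s <= c * Rpower s (- theta) * u s) ->
  (forall s, 0 <= u s) ->
  forall s, T <= s -> u s <= u T * exp (c / (theta - 1) * Rpower T (1 - theta)).
Proof.
  intros Hc Htheta HT Hu Hdu Hpos.
  set (Phi := fun s => c / (theta - 1) * Rpower s (1 - theta)).
  assert (Phi_ge0 : forall s, 0 <= Phi s).
  { intros s. unfold Phi, Rdiv. pose proof (exp_pos ((1 - theta) * ln s)).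
    pose proof (Rinv_0_lt_compat (theta - 1) ltac:(lra)).
    apply Rmult_le_pos; [apply Rmult_le_pos|unfold Rpower]; lra. }
  set (dPhi := fun s => c / (theta - 1) * ((1 - theta) * Rpower s (1 - theta - 1))).
  assert (HdPhi : forall s, T <= s -> dPhi s = - c * Rpower s (- theta)).
  { intros s _. unfold dPhi. replace (1 - theta - 1) with (- theta) by ring. field. lra. }
  assert (Hmono := nonincreasing_of_derive_nonpos (fun s => u s * exp (Phi s))
            (fun s => du s * exp (Phi s) + u s * (exp (Phi s) * dPhi s)) T).
  intros s Hs.
  assert (u s * exp (Phi s) <= u T * exp (Phi T)).
  { apply Hmono; [| |exact Hs]; intros r Hr.
    - apply (derivable_pt_lim_mult u (fun s => exp (Phi s))); [apply Hu; lra|].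
      apply (derivable_pt_lim_comp Phi exp); [|apply derivable_pt_lim_exp].
      apply derivable_pt_lim_scal, derivable_pt_lim_power; lra.
    - rewrite HdPhi by exact Hr. pose proof (Hdu r Hr). pose proof (exp_pos (Phi r)). nra. }
  assert (1 <= exp (Phi s)) by (pose proof (exp_ineq1_le (Phi s)); pose proof (Phi_ge0 s); lra).
  pose proof (Hpos s). fold (Phi T). nra.
Qed.

Lemma gam_ge_half K k : (1 <= k <= K - 1)%nat -> 1 / 2 <= gam K k.
Proof.
  intros Hk. unfold gam.
  assert (1 <= INR k) by (apply (le_INR 1); lia).
  assert (1 <= INR (K - k)) by (apply (le_INR 1); lia).
  nra.
Qed.

Lemma gam_boundary K : gam K 0 = 0 /\ gam K K = 0.
Proof. unfold gam. rewrite Nat.sub_diag. simpl. split; field. Qed.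

Definition lyapunov (K : nat) (z : nat -> R -> R) (s : R) : R :=
  sum1n (fun k => gam K k * exp_excess (z k s)) (K - 1).

Definition lyapunov_rate (K : nat) (z dz : nat -> R -> R) (s : R) : R :=
  sum1n (fun k => gam K k * ((1 - exp (- z k s)) * dz k s)) (K - 1).

Lemma gam_mul_exp_excess_ge0 K k a : (1 <= k <= K - 1)%nat -> 0 <= gam K k * exp_excess a.
Proof. intros Hk. pose proof (gam_ge_half K k Hk). pose proof (exp_excess_ge0 a). nra. Qed.

Lemma lyapunov_ge0 K (z : nat -> R -> R) s : 0 <= lyapunov K z s.
Proof. intros; apply sum1n_ge0; intros; apply gam_mul_exp_excess_ge0; assumption. Qed.

Lemma exp_excess_le_lyapunov K (z : nat -> R -> R) s k :
  (1 <= k <= K - 1)%nat -> exp_excess (z k s) <= 2 * lyapunov K z s.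
Proof.
  intros Hk.
  assert (gam K k * exp_excess (z k s) <= lyapunov K z s)
    by (apply (sum1n_ge_term (fun k => gam K k * exp_excess (z k s))); auto using gam_mul_exp_excess_ge0).
  pose proof (gam_ge_half K k Hk). pose proof (exp_excess_ge0 (z k s)). nra.
Qed.

Lemma derivable_pt_lim_lyapunov K (z dz : nat -> R -> R) s :
  (forall k, (1 <= k <= K - 1)%nat -> derivable_pt_lim (z k) s (dz k s)) ->
  derivable_pt_lim (lyapunov K z) s (lyapunov_rate K z dz s).
Proof.
  intros Hz. unfold lyapunov, lyapunov_rate.
  apply (derivable_pt_lim_sum1n (fun k s => gam K k * exp_excess (z k s))
           (fun k s => gam K k * ((1 - exp (- z k s)) * dz k s))).
  intros k Hk. apply derivable_pt_lim_scal, derivable_pt_lim_exp_excess_comp, Hz, Hk.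
Qed.

Lemma rhs_dissipative K (z : nat -> R -> R) s : (1 <= K)%nat ->
  sum1n (fun k => gam K k * (1 - exp (- z k s)) * rhs K z k s) (K - 1) <= 0.
Proof.
  intros HK. set (W := fun j => gam K j * (exp (- z j s) - 1)).
  rewrite (sum1n_ext _ (fun k => -1 * (W k * (2 * W k - W (S k) - W (k - 1)%nat)))).
  2: { intros k. unfold W, rhs. ring. }
  destruct (gam_boundary K) as [G0 GK].
  assert (0 <= sum1n (fun k => W k * (2 * W k - W (S k) - W (k - 1)%nat)) (K - 1)).
  { apply sum1n_laplacian_ge0; unfold W.
    - rewrite G0; ring.
    - replace (S (K - 1)) with K by lia. rewrite GK; ring. }
  rewrite sum1n_scal. lra.
Qed.

Lemma lyapunov_rate_term_le g a d r t e :
  0 <= g -> 0 <= t -> Rabs (d - / t * r) <= e ->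
  g * ((1 - exp (- a)) * d) <= / t * (g * (1 - exp (- a)) * r) + e * (2 * (g * exp_excess a) + g).
Proof.
  intros Hg Ht He. set (W := g * (exp (- a) - 1)).
  assert (HW : Rabs W <= g * (2 * exp_excess a + 1)).
  { unfold W. rewrite Rabs_mult, (Rabs_right g) by lra.
    apply Rmult_le_compat_l; [lra | apply Rabs_expN_sub1_le]. }
  assert (- (W * (d - / t * r)) <= Rabs W * e).
  { apply Rle_trans with (Rabs (- (W * (d - / t * r)))); [apply Rle_abs|].
    rewrite Rabs_Ropp, Rabs_mult. apply Rmult_le_compat_l; [apply Rabs_pos | exact He]. }
  assert (0 <= e) by (apply Rle_trans with (2 := He), Rabs_pos).
  assert (Rabs W * e <= g * (2 * exp_excess a + 1) * e) by (apply Rmult_le_compat_r; lra).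
  unfold W in *. nra.
Qed.

Lemma lyapunov_rate_le K (z dz : nat -> R -> R) s e : (1 <= K)%nat -> 0 < s ->
  (forall k, (1 <= k <= K - 1)%nat -> Rabs (dz k s - / s * rhs K z k s) <= e) ->
  lyapunov_rate K z dz s <= e * (2 * lyapunov K z s + sum1n (gam K) (K - 1)).
Proof.
  intros HK Hs He. unfold lyapunov_rate, lyapunov.
  eapply Rle_trans.
  { apply sum1n_le. intros k Hk. apply (lyapunov_rate_term_le _ _ _ (rhs K z k s) s); [| lra | exact (He k Hk)].
    pose proof (gam_ge_half K k Hk). lra. }
  rewrite sum1n_plus, !sum1n_scal, sum1n_plus, sum1n_scal.
  pose proof (rhs_dissipative K z s HK).
  assert (0 < / s) by (apply Rinv_0_lt_compat; lra).
  nra.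
Qed.

Theorem mainTheorem12 (K : nat) (theta T : R) (z dz : nat -> R -> R)
  (hK : (2 <= K)%nat) (htheta : 1 < theta) (hT : 0 < T)
  (hderiv : forall k t, (1 <= k <= K - 1)%nat -> T <= t ->
              derivable_pt_lim (z k) t (dz k t))
  (hcont : forall k t, (1 <= k <= K - 1)%nat -> T <= t ->
              continuity_pt (dz k) t)
  (hode : exists C : R, forall k t, (1 <= k <= K - 1)%nat -> T <= t ->
              Rabs (dz k t - / t * rhs K z k t) <= C * Rpower t (- theta)) :
  exists M1 : R, 0 < M1 /\
    forall k t, (1 <= k <= K - 1)%nat -> T <= t -> Rabs (z k t) <= M1.
Proof.
  destruct hode as [C hC].
  set (G := sum1n (gam K) (K - 1)).
  set (u := fun s => 2 * lyapunov K z s + G).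
  assert (G_ge0 : 0 <= G) by (apply sum1n_ge0; intros k Hk; pose proof (gam_ge_half K k Hk); lra).
  assert (u_ge0 : forall s, 0 <= u s) by (intros s; pose proof (lyapunov_ge0 K z s); unfold u; lra).
  assert (Hbound := gronwall_power u (fun s => 2 * lyapunov_rate K z dz s + 0) (2 * Rabs C) theta T
    ltac:(pose proof (Rabs_pos C); lra) htheta hT).
  set (B := u T * exp (2 * Rabs C / (theta - 1) * Rpower T (1 - theta))) in Hbound.
  exists (B + 1). split.
  - assert (0 <= B) by (apply Rmult_le_pos; [apply u_ge0 | left; apply exp_pos]). lra.
  - intros k t Hk Ht.
    assert (u t <= B).
    { apply Hbound; [| |exact u_ge0|exact Ht]; intros s Hs.
      - apply derivable_pt_lim_plus; [|apply derivable_pt_lim_const].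
        apply derivable_pt_lim_scal, derivable_pt_lim_lyapunov. intros j Hj. apply hderiv; assumption.
      - assert (He : forall j, (1 <= j <= K - 1)%nat ->
                  Rabs (dz j s - / s * rhs K z j s) <= Rabs C * Rpower s (- theta)).
        { intros j Hj. eapply Rle_trans; [exact (hC j s Hj Hs)|].
          apply Rmult_le_compat_r; [left; apply exp_pos | apply Rle_abs]. }
        pose proof (lyapunov_rate_le K z dz s _ ltac:(lia) ltac:(lra) He).
        fold G in H. unfold u. lra. }
    pose proof (Rabs_le_exp_excess (z k t)). pose proof (exp_excess_le_lyapunov K z t k Hk).
    unfold u in *. lra.
Qed.
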